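(* Let $X$ be a non-empty finite set and $\mathcal{P}$ a partition of $X$ such that $\mathcal{P}$ has exactly $m_i\ge 2$ blocks of size $n_i\ge 2$ for $i=1,\dots,p$ (the $n_i$ pairwise distinct), exactly one block of each of the sizes $l_1,\dots,l_q$ with each $l_i\ge 2$ (these sizes distinct from each other and from the $n_i$), and $t$ singleton blocks, and no other blocks ($p,q,t$ may be $0$). Then $$\operatorname{rank}(T(X,\mathcal{P}):\Sigma(X,\mathcal{P}))=\binom{p+q}{2}+p+h(p,q,t),$$ where $h(p,q,0)=0$, $h(p,q,1)=p+q$ and $h(p,q,t)=p+q+1$ for $t\ge 2$.
   Context: $T(X,\mathcal{P})$ is the semigroup (under composition) of maps $f:X\to X$ such that for every block $P$ of $\mathcal{P}$ there is a block $Q$ with $Pf\subseteq Q$; $\Sigma(X,\mathcal{P})$ is the subsemigroup of those $f\in T(X,\mathcal{P})$ whose image intersects every block of $\mathcal{P}$. For a subsemigroup $U$ of a semigroup $V$, the relative rank $\operatorname{rank}(V:U)$ is the least cardinality of a subset $W\subseteq V$ such that $U\cup W$ generates $V$ as a semigroup. *)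

From mathcomp Require Import all_boot.
Set Implicit Arguments. Unset Strict Implicit. Unset Printing Implicit Defensive.

(* Maps X -> X as finite functions; composition "f then g" (right action xfg). *)
Definition fcomp (X : finType) (f g : {ffun X -> X}) : {ffun X -> X} :=
  [ffun x => g (f x)].

Definition seqprod (X : finType) (f : {ffun X -> X}) (s : seq {ffun X -> X}) :=
  foldl (@fcomp X) f s.

Definition gen_sg (X : finType) (S : {set {ffun X -> X}}) : {ffun X -> X} -> Prop :=
  fun g => exists (f : {ffun X -> X}) (s : seq {ffun X -> X}),
      f \in S /\ all (fun h => h \in S) s /\ g = seqprod f s.

Definition Tpart (X : finType) (P : {set {set X}}) : {set {ffun X -> X}} :=
  [set f : {ffun X -> X} | [forall B in P, [exists C in P, f @: B \subset C]]].

Definition Sigpart (X : finType) (P : {set {set X}}) : {set {ffun X -> X}} :=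
  [set f in Tpart P | [forall B in P, [exists x, f x \in B]]].

Definition generates (X : finType) (V U W : {set {ffun X -> X}}) : Prop :=
  forall g, gen_sg (U :|: W) g <-> g \in V.

Definition relative_rank_is (X : finType) (V U : {set {ffun X -> X}}) (r : nat) : Prop :=
  (exists W : {set {ffun X -> X}}, W \subset V /\ generates V U W /\ #|W| = r) /\
  (forall W : {set {ffun X -> X}}, W \subset V -> generates V U W -> r <= #|W|).

Definition hfun (p q t : nat) : nat :=
  match t with 0 => 0 | 1 => p + q | _ => (p + q).+1 end.

Definition nblocks (X : finType) (P : {set {set X}}) (k : nat) : nat :=
  #|[set B in P | #|B| == k]|.

From mathcomp Require Import all_boot zify.
Set Implicit Arguments. Unset Strict Implicit. Unset Printing Implicit Defensive.

(* A map of T(X,P) induces a map on the blocks of P, and it lies in Sigma(X,P) exactly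
   when this block map is a permutation.  Call (a, b), a >= b, a type of P when there are
   two distinct blocks of sizes a and b; the relative rank is the number of types.

   Upper bound: for each type take one map merging a block of size b injectively into a
   block of size a.  Conjugating it by block swaps, which lie in Sigma, gives every such
   merge.  A map g outside Sigma misses a block; walking backwards along its block map from
   there into a cycle gives two blocks with the same image, one on the cycle and one off it.
   Rotating that cycle by an element of Sigma and merging one of the two blocks into the
   other, g factors as s c h (right action) with s in Sigma, c a merge and h hitting more
   blocks than g, so induction on the number of missed blocks applies.

   Lower bound: when a merge of type (a, b) is a product of generators, its first factor w
   outside Sigma identifies exactly the images of the two merged blocks, so the sizes of
   the pairs of blocks identified by w are (a, b) and (b, a): distinct types need distinct
   generators.

   Counting: the types are the pairs of distinct occurring sizes and the sizes occurring
   at least twice, C(p + q + [t > 0], 2) + p + [t > 1] in all. *)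

Section Composition.
Variable X : finType.
Implicit Types f g h : {ffun X -> X}.

Lemma fcompE f g x : fcomp f g x = g (f x).
Proof. by rewrite ffunE. Qed.

Lemma fcompA f g h : fcomp (fcomp f g) h = fcomp f (fcomp g h).
Proof. by apply/ffunP => x; rewrite !fcompE. Qed.

Lemma foldl_fcompA f g (s : seq {ffun X -> X}) :
  foldl (@fcomp X) (fcomp f g) s = fcomp f (foldl (@fcomp X) g s).
Proof. by elim: s f g => [|h s IHs] f g //=; rewrite fcompA IHs. Qed.

Definition ffid : {ffun X -> X} := [ffun x => x].

Lemma fcomp_idl f : fcomp ffid f = f.
Proof. by apply/ffunP => x; rewrite fcompE ffunE. Qed.

Lemma fcomp_idr f : fcomp f ffid = f.
Proof. by apply/ffunP => x; rewrite fcompE ffunE. Qed.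

Lemma gen_sg_mem (S : {set {ffun X -> X}}) f : f \in S -> gen_sg S f.
Proof. by move=> fS; exists f, [::]. Qed.

Lemma gen_sg_comp (S : {set {ffun X -> X}}) f g :
  gen_sg S f -> gen_sg S g -> gen_sg S (fcomp f g).
Proof.
move=> [f0 [s [f0S [sS ->]]]] [g0 [s' [g0S [s'S ->]]]].
exists f0, (s ++ g0 :: s'); split=> //; split; first by rewrite all_cat sS /= g0S.
by rewrite /seqprod foldl_cat /= foldl_fcompA.
Qed.

Lemma gen_sg_sub (S V : {set {ffun X -> X}}) g :
  S \subset V -> (forall f h, f \in V -> h \in V -> fcomp f h \in V) ->
  gen_sg S g -> g \in V.
Proof.
move=> /subsetP SV compV [f [s [/SV fV [sS ->]]]]; rewrite /seqprod.
elim: s f fV sS => [|h s IHs] f fV //= /andP [/SV hV sS].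
exact: IHs (compV _ _ fV hV) sS.
Qed.

End Composition.

Section Embedding.
Variable T : finType.
Implicit Types A B : {set T}.

(* Pairs the k-th elements of [enum A] and [enum B]; junk outside [A]. *)
Definition emb A B (x : T) : T := nth x (enum B) (index x (enum A)).

Lemma index_emb A B x : #|A| <= #|B| -> x \in A -> index (emb A B x) (enum B) = index x (enum A).
Proof.
move=> leAB xA; apply: index_uniq (enum_uniq _); rewrite -cardE.
by apply: leq_trans leAB; rewrite cardE index_mem mem_enum.
Qed.

Lemma emb_mem A B x : #|A| <= #|B| -> x \in A -> emb A B x \in B.
Proof.
move=> leAB xA; rewrite -mem_enum mem_nth // -cardE.
by apply: leq_trans leAB; rewrite cardE index_mem mem_enum.
Qed.

Lemma embK A B x : #|A| <= #|B| -> x \in A -> emb B A (emb A B x) = x.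
Proof. by move=> leAB xA; rewrite /emb (index_emb leAB xA) nth_index ?mem_enum. Qed.

Lemma emb_inj A B : #|A| <= #|B| -> {in A &, injective (emb A B)}.
Proof. by move=> leAB x y xA yA exy; rewrite -(embK leAB xA) exy embK. Qed.

Lemma emb_id A x : x \in A -> emb A A x = x.
Proof. by move=> xA; rewrite /emb nth_index ?mem_enum. Qed.

Lemma inj_extend (V V0 Z : {set T}) (psi : T -> T) :
  V0 \subset V -> {in V0 &, injective psi} -> (forall v, v \in V0 -> psi v \in Z) ->
  #|V| <= #|Z| ->
  exists lam : T -> T, [/\ {in V &, injective lam}, forall v, v \in V -> lam v \in Z
                         & {in V0, lam =1 psi}].
Proof.
move=> V0V psiI psiZ leVZ.
have psiV0Z : psi @: V0 \subset Z by apply/subsetP => _ /imsetP [v vV0 ->]; apply: psiZ.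
have le_rest : #|V :\: V0| <= #|Z :\: psi @: V0|.
  by rewrite !cardsD (setIidPr V0V) (setIidPr psiV0Z) (card_in_imset psiI) leq_sub2r.
pose e := emb (V :\: V0) (Z :\: psi @: V0).
have eZ v : v \in V :\: V0 -> e v \in Z :\: psi @: V0 by apply: emb_mem.
exists (fun v => if v \in V0 then psi v else e v); split=> [x y xV yV|v vV|v ->//].
- have [xV0|xNV0] := boolP (x \in V0); have [yV0|yNV0] := boolP (y \in V0).
  + exact: psiI.
  + move=> exy; have := eZ y; rewrite !inE yNV0 yV -exy imset_f //.
    by move/(_ isT)/andP => [].
  + move=> exy; have := eZ x; rewrite !inE xNV0 xV exy imset_f //.
    by move/(_ isT)/andP => [].
  + by apply: emb_inj; rewrite ?inE ?xNV0 ?yNV0.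
- case: ifP => [/psiZ //|vNV0].
  by have := eZ v; rewrite !inE vNV0 vV => /(_ isT) /andP [].
Qed.

End Embedding.

Section Periodic.
Variables (T : finType) (P : {set T}) (phi : T -> T).
Hypothesis phiP : forall x, x \in P -> phi x \in P.

Definition periodic_pts :=
  [set x in P | [exists k : 'I_#|P|.+1, (0 < k) && (iter k phi x == x)]].

Lemma iter_mem k x : x \in P -> iter k phi x \in P.
Proof. by move=> xP; elim: k => //= k; apply: phiP. Qed.

Lemma periodic_ptsP x :
  reflect (x \in P /\ exists2 k, 0 < k <= #|P| & iter k phi x = x) (x \in periodic_pts).
Proof.
rewrite inE; apply: (iffP andP) => [[xP /existsP [k /andP [k0 /eqP kx]]]|[xP [k /andP [k0 kP] kx]]].
  by split=> //; exists k => //; rewrite k0 -ltnS ltn_ord.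
by split=> //; apply/existsP; exists (Ordinal (kP : k < #|P|.+1)); rewrite /= k0 kx eqxx.
Qed.

Lemma phi_periodic_pts : phi @: periodic_pts = periodic_pts.
Proof.
apply/setP => y; apply/imsetP/periodic_ptsP => [[x /periodic_ptsP [xP [k kP kx]] ->]|].
  by split; [apply: phiP | exists k => //; rewrite -iterSr iterS kx].
case=> yP [k /andP [k0 kP] ky]; exists (iter k.-1 phi y); last by rewrite -iterS prednK.
apply/periodic_ptsP; split; first exact: iter_mem.
by exists k; rewrite ?k0 // -iterD addnC iterD ky.
Qed.

Lemma periodic_entry m : m \in P -> m \notin phi @: P ->
  exists Y Y', [/\ Y \in periodic_pts, Y' \in P :\: periodic_pts & phi Y = phi Y'].
Proof.
move=> mP mNphi.
have [i [j [ij jP eqij]]] : exists i j, [/\ i < j, j <= #|P| & iter i phi m = iter j phi m].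
  pose it (k : 'I_#|P|.+1) := iter k phi m.
  have /injectivePn [k [l kl eqkl]] : ~~ injectiveb it.
    apply: contraTN (leqnn #|P|.+1) => /injectiveP itI; rewrite -ltnNge.
    rewrite -{1}(card_ord #|P|.+1) -(card_imset _ itI); apply: subset_leq_card.
    by apply/subsetP => _ /imsetP [k _ ->]; apply: iter_mem.
  have [lt|lt|/val_inj eq] := ltngtP k l; last by rewrite eq eqxx in kl.
  - by exists k, l; split=> //; rewrite -ltnS ltn_ord.
  - by exists l, k; split=> //; rewrite -ltnS ltn_ord.
have reach : exists k, iter k phi m \in periodic_pts.
  exists i; apply/periodic_ptsP; split; first exact: iter_mem.
  exists (j - i); first by rewrite subn_gt0 ij (leq_trans (leq_subr _ _)).
  by rewrite -iterD subnK ?eqij // ltnW.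
case: (ex_minnP reach) => -[|k] kper kmin.
  move: kper => /periodic_ptsP [_ [l /andP [l0 _] /= lm]]; case/negP: mNphi.
  by rewrite -lm -(prednK l0) iterS imset_f // iter_mem.
have [Y YA eqY] : exists2 Y, Y \in periodic_pts & phi Y = iter k.+1 phi m.
  by move: kper; rewrite -{1}phi_periodic_pts => /imsetP [Y YA ->]; exists Y.
exists Y, (iter k phi m); split=> //; rewrite inE iter_mem // andbT.
by apply/negP => /kmin; rewrite ltnn.
Qed.

End Periodic.

Lemma card_strict_pairs n (S : {set 'I_n}) :
  #|[set ab : 'I_n * 'I_n | [&& ab.2 < ab.1, ab.1 \in S & ab.2 \in S]]| = 'C(#|S|, 2).
Proof.
rewrite -cards_draws -(@card_in_imset _ _ (fun ab => [set ab.1; ab.2])) => [|[a b] [c d]].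
  apply: eq_card => A; rewrite inE; apply/imsetP/andP => [[[a b]]|[sub /cards2P [x [y [xy eqA]]]]].
    rewrite inE /= => /and3P [ba aS bS] ->; split.
      by apply/subsetP => x; rewrite !inE => /orP [] /eqP ->.
    by rewrite cards2; case: (eqVneq a b) ba => [->|//]; rewrite ltnn.
  move/subsetP: sub; rewrite eqA => AS.
  have xyS : (x \in S) && (y \in S) by apply/andP; split; apply: AS; rewrite !inE eqxx ?orbT.
  have [lt|lt|/val_inj eq] := ltngtP x y; last by rewrite eq eqxx in xy.
  - by exists (y, x); [rewrite inE /= lt /= andbC | apply: setUC].
  - by exists (x, y); first rewrite inE /= lt.
rewrite !inE /= => /and3P [ba _ _] /and3P [dc _ _] /setP eq.
move: (eq a) (eq b) (eq c); rewrite !inE !eqxx ?orbT /= -!(inj_eq (@ord_inj n)) => /esym/orP ac /esym/orP bd /orP ca.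
by congr pair; apply: ord_inj; lia.
Qed.

Lemma card_ord_mem n (s : seq nat) : uniq s -> all (gtn n) s ->
  #|[set a : 'I_n | val a \in s]| = size s.
Proof.
move=> us /allP sn; rewrite cardE -(size_map val); apply/perm_size/uniq_perm => //.
  by rewrite map_inj_uniq ?enum_uniq //; apply: val_inj.
move=> x; apply/mapP/idP => [[a] |xs]; first by rewrite mem_enum inE => ? ->.
by exists (Ordinal (sn x xs)); rewrite ?mem_enum ?inE.
Qed.

Section Partition.
Variables (X : finType) (P : {set {set X}}).
Hypothesis partP : partition P [set: X].
Local Notation blk := (pblock P).

Lemma partition_trivIset : trivIset P. Proof. by case/and3P: partP. Qed.

Lemma mem_cover x : x \in cover P.
Proof. by case/and3P: partP => /eqP -> _ _; rewrite inE. Qed.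

Lemma pblockT_mem x : blk x \in P. Proof. exact: pblock_mem (mem_cover x). Qed.

Lemma mem_pblockT x : x \in blk x. Proof. by rewrite mem_pblock mem_cover. Qed.

Lemma def_pblockT B x : B \in P -> x \in B -> blk x = B.
Proof. exact: def_pblock partition_trivIset. Qed.

Lemma pblockT_eq x y : blk x = blk y -> y \in blk x.
Proof. by move=> ->; apply: mem_pblockT. Qed.

Lemma block_inhabited B : B \in P -> exists x, x \in B.
Proof.
move=> BP; case: (set_0Vmem B) => [B0|[x xB]]; last by exists x.
by case/and3P: partP => _ _; rewrite -B0 BP.
Qed.

Definition blockwise (f : X -> X) := forall x y, blk x = blk y -> blk (f x) = blk (f y).

Definition onto_blocks (f : X -> X) := forall B, B \in P -> exists x, f x \in B.

Lemma mem_Tpart f : f \in Tpart P <-> blockwise f.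
Proof.
rewrite inE; split.
- move=> /forall_inP fT x y exy.
  have /exists_inP [C CP /subsetP sub] := fT _ (pblockT_mem x).
  have fxC : f x \in C by apply/sub/imset_f/mem_pblockT.
  have fyC : f y \in C by apply/sub/imset_f; rewrite exy mem_pblockT.
  by rewrite (def_pblockT CP fxC) (def_pblockT CP fyC).
- move=> fB; apply/forall_inP => B BP; have [x xB] := block_inhabited BP.
  apply/exists_inP; exists (blk (f x)); first exact: pblockT_mem.
  apply/subsetP => _ /imsetP [y yB ->]; apply/pblockT_eq/fB.
  by rewrite (def_pblockT BP yB) (def_pblockT BP xB).
Qed.

Lemma mem_Sigpart f : f \in Sigpart P <-> blockwise f /\ onto_blocks f.
Proof.
rewrite inE; split.
- case/andP => /mem_Tpart fB /forall_inP fS; split=> // B BP; exact/existsP/fS.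
- case=> fB fS; apply/andP; split; first exact/mem_Tpart.
  by apply/forall_inP => B /fS /existsP.
Qed.

Lemma blockwise_comp (f g : {ffun X -> X}) :
  blockwise f -> blockwise g -> blockwise (fcomp f g).
Proof. by move=> fB gB x y exy; rewrite !fcompE; apply/gB/fB. Qed.

Lemma onto_blocks_comp (f g : {ffun X -> X}) :
  blockwise g -> onto_blocks f -> onto_blocks g -> onto_blocks (fcomp f g).
Proof.
move=> gB fS gS B BP; have [y gyB] := gS B BP; have [x fxy] := fS _ (pblockT_mem y).
exists x; rewrite fcompE -(def_pblockT BP gyB); apply/pblockT_eq/gB.
by rewrite (def_pblockT (pblockT_mem y) fxy).
Qed.

Lemma Tpart_comp (f g : {ffun X -> X}) :
  f \in Tpart P -> g \in Tpart P -> fcomp f g \in Tpart P.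
Proof. by move=> /mem_Tpart fB /mem_Tpart gB; apply/mem_Tpart/blockwise_comp. Qed.

Lemma Sigpart_comp (f g : {ffun X -> X}) :
  f \in Sigpart P -> g \in Sigpart P -> fcomp f g \in Sigpart P.
Proof.
move=> /mem_Sigpart [fB fS] /mem_Sigpart [gB gS].
by apply/mem_Sigpart; split; [apply: blockwise_comp | apply: onto_blocks_comp].
Qed.

Lemma Sigpart_Tpart : Sigpart P \subset Tpart P.
Proof. by apply/subsetP => f; rewrite inE => /andP []. Qed.

Lemma ffid_Sigpart : ffid X \in Sigpart P.
Proof.
apply/mem_Sigpart; split=> [x y|B /block_inhabited [x xB]]; rewrite ?ffunE //.
by exists x; rewrite ffunE.
Qed.

Lemma gen_sg_Tpart (W : {set {ffun X -> X}}) g :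
  W \subset Tpart P -> gen_sg (Sigpart P :|: W) g -> g \in Tpart P.
Proof.
by move=> WT; apply: gen_sg_sub Tpart_comp; rewrite subUset Sigpart_Tpart.
Qed.


Lemma foldl_Tpart f (s : seq {ffun X -> X}) :
  f \in Tpart P -> all (mem (Tpart P)) s -> foldl (@fcomp X) f s \in Tpart P.
Proof.
elim: s f => [|h s IHs] f fT //= /andP [hT sT].
exact: IHs (Tpart_comp fT hT) sT.
Qed.

Lemma gen_sg_first_out (W : {set {ffun X -> X}}) g :
  W \subset Tpart P -> gen_sg (Sigpart P :|: W) g -> g \notin Sigpart P ->
  exists u w v, [/\ u \in Sigpart P, w \in W :\: Sigpart P, v \in Tpart P
                  & g = fcomp (fcomp u w) v].
Proof.
move=> WT [f [s [fSW [sSW ->]]]].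
have /subsetP SWT : Sigpart P :|: W \subset Tpart P by rewrite subUset Sigpart_Tpart.
suff first_out a l : a \in Sigpart P -> all (mem (Sigpart P :|: W)) l ->
    foldl (@fcomp X) a l \notin Sigpart P ->
    exists u w v, [/\ u \in Sigpart P, w \in W :\: Sigpart P, v \in Tpart P
                    & foldl (@fcomp X) a l = fcomp (fcomp u w) v].
  by have := first_out (ffid X) (f :: s); rewrite /= fcomp_idl fSW; apply; rewrite ?ffid_Sigpart.
elim: l a => [|h l IHl] a aS /=; first by rewrite aS.
case/andP => hSW lSW; have [hS|hNS] := boolP (h \in Sigpart P).
  exact: IHl (Sigpart_comp aS hS) lSW.
move=> _; exists a, h, (foldl (@fcomp X) (ffid X) l); split=> //.
- by rewrite inE hNS; move: hSW; rewrite inE (negbTE hNS).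
- apply: foldl_Tpart; first exact: (subsetP Sigpart_Tpart) ffid_Sigpart.
  by apply/allP => k /(allP lSW) /SWT.
- by rewrite -foldl_fcompA fcomp_idr.
Qed.

Definition bmap (f : X -> X) (B : {set X}) : {set X} :=
  if [pick x in B] is Some x then blk (f x) else B.

Section BlockMap.
Variable f : X -> X.
Hypothesis fB : blockwise f.

Lemma bmapE B x : B \in P -> x \in B -> bmap f B = blk (f x).
Proof.
move=> BP xB; rewrite /bmap; case: pickP => [y yB|/(_ x)]; last by rewrite xB.
by apply: fB; rewrite (def_pblockT BP xB) (def_pblockT BP yB).
Qed.

Lemma bmap_pblock x : bmap f (blk x) = blk (f x).
Proof. exact: bmapE (pblockT_mem x) (mem_pblockT x). Qed.

Lemma bmap_mem B : B \in P -> bmap f B \in P.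
Proof. by move=> BP; have [x xB] := block_inhabited BP; rewrite (bmapE BP xB) pblockT_mem. Qed.

Lemma mem_bmap B x : B \in P -> x \in B -> f x \in bmap f B.
Proof. by move=> BP xB; rewrite (bmapE BP xB) mem_pblockT. Qed.

Lemma collision_of_not_onto : ~ onto_blocks f ->
  exists E F, [/\ E \in P, F \in P, E != F & bmap f E = bmap f F].
Proof.
move=> fNS.
have [/exists_inP [E EP /exists_inP [F FP /andP [EF /eqP eqEF]]]|] :=
  boolP [exists E in P, exists F in P, (E != F) && (bmap f E == bmap f F)].
  by exists E, F.
move=> /exists_inPn noColl; case: fNS => C CP.
have inj : {in P &, injective (bmap f)}.
  move=> E F EP FP eqEF; apply/eqP/negPn/negP => EF.
  by move: (noColl E EP) => /exists_inPn /(_ F FP); rewrite EF eqEF eqxx.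
have : bmap f @: P = P.
  apply/eqP; rewrite eqEcard (card_in_imset inj) leqnn andbT.
  by apply/subsetP => _ /imsetP [E EP ->]; apply: bmap_mem.
move/setP/(_ C); rewrite CP => /imsetP [E EP ->].
by have [x xE] := block_inhabited EP; exists x; apply: mem_bmap.
Qed.

End BlockMap.

Lemma bmap_comp (f g : {ffun X -> X}) B : blockwise f -> blockwise g -> B \in P ->
  bmap (fcomp f g) B = bmap g (bmap f B).
Proof.
move=> fB gB BP; have [x xB] := block_inhabited BP.
by rewrite (bmapE (blockwise_comp fB gB) BP xB) fcompE (bmapE fB BP xB) bmap_pblock.
Qed.

Section OntoBlockMap.
Variable u : X -> X.
Hypotheses (uB : blockwise u) (uS : onto_blocks u).

Lemma bmap_onto : bmap u @: P = P.
Proof.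
apply/setP => C; apply/imsetP/idP => [[B BP ->]|CP]; first exact: bmap_mem.
have [x uxC] := uS CP; exists (blk x); first exact: pblockT_mem.
by rewrite bmap_pblock // (def_pblockT CP uxC).
Qed.

Lemma bmap_inj : {in P &, injective (bmap u)}.
Proof. by apply/imset_injP; rewrite bmap_onto. Qed.

Lemma card_bmap : (forall x y, blk x = blk y -> u x = u y -> x = y) ->
  forall E, E \in P -> #|bmap u E| = #|E|.
Proof.
move=> uI.
have le_card E : E \in P -> #|E| <= #|bmap u E|.
  move=> EP; rewrite -(@card_in_imset _ _ u) => [|x y xE yE]; last first.
    by apply: uI; rewrite (def_pblockT EP xE) (def_pblockT EP yE).
  by apply/subset_leq_card/subsetP => _ /imsetP [x xE ->]; apply: mem_bmap.
have sum_eq : \sum_(E in P) #|bmap u E| = \sum_(E in P) #|E|.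
  by rewrite -[in RHS]bmap_onto big_imset //; apply: bmap_inj.
move=> E EP; apply/eqP; rewrite eqn_leq le_card // andbT leqNgt; apply/negP => lt.
suff : \sum_(F in P) #|F| < \sum_(F in P) #|bmap u F| by rewrite sum_eq ltnn.
rewrite (bigD1 E) // [X in _ < X](bigD1 E) //= -addSn leq_add //.
by apply: leq_sum => F /andP [FP _]; apply: le_card.
Qed.

End OntoBlockMap.

Definition merge (D : {set X}) (i : X -> X) : {ffun X -> X} :=
  [ffun x => if x \in D then i x else x].

Definition ocard (B : {set X}) : 'I_#|X|.+1 := inord #|B|.

Lemma ocardE B : ocard B = #|B| :> nat.
Proof. by rewrite inordK // ltnS max_card. Qed.

Lemma ocard_eq_card A B : ocard A = ocard B -> #|A| = #|B|.
Proof. by move/(congr1 val); rewrite /= !ocardE. Qed.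

Definition collision_sizes (w : X -> X) : {set 'I_#|X|.+1 * 'I_#|X|.+1} :=
  [set (ocard E, ocard F) | E in P, F in P & (E != F) && (bmap w E == bmap w F)].

Section Merge.
Variables (D1 D2 : {set X}) (i : X -> X).
Hypotheses (D1P : D1 \in P) (D2P : D2 \in P) (D1D2 : D1 != D2).
Hypotheses (iI : {in D2 &, injective i}) (iD : forall x, x \in D2 -> i x \in D1).
Local Notation m := (merge D2 i).

Lemma pblock_merge x : blk (m x) = if blk x == D2 then D1 else blk x.
Proof.
rewrite ffunE; have [xD|xND] := boolP (x \in D2).
  by rewrite (def_pblockT D2P xD) eqxx (def_pblockT D1P (iD xD)).
by case: eqP => // eqx; move: xND; rewrite -eqx mem_pblockT.
Qed.

Lemma merge_blockwise : blockwise m.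
Proof. by move=> x y exy; rewrite !pblock_merge exy. Qed.

Lemma bmap_merge E : E \in P -> bmap m E = if E == D2 then D1 else E.
Proof.
move=> EP; have [x xE] := block_inhabited EP.
by rewrite (bmapE merge_blockwise EP xE) pblock_merge (def_pblockT EP xE).
Qed.

Lemma merge_inj_blocks x y : blk x = blk y -> m x = m y -> x = y.
Proof.
move=> exy; rewrite !ffunE.
have [xD|xND] := boolP (x \in D2); have [yD|yND] := boolP (y \in D2) => //.
- exact: iI.
- by move: yND; rewrite -(def_pblockT D2P xD) exy mem_pblockT.
- by move: xND; rewrite -(def_pblockT D2P yD) -exy mem_pblockT.
Qed.

Lemma merge_collision E F : E \in P -> F \in P -> E != F -> bmap m E = bmap m F ->
  ((E == D1) && (F == D2)) || ((E == D2) && (F == D1)).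
Proof.
move=> EP FP; rewrite !bmap_merge //.
have [->|ED2] := eqVneq E D2; have [->|FD2] := eqVneq F D2 => /=.
- by [].
- by move=> _ <-; rewrite eqxx orbT.
- by move=> _ ->; rewrite eqxx.
- by move=> /negPf EF eqEF; rewrite eqEF eqxx in EF.
Qed.

Lemma collision_sizes_merge :
  collision_sizes m = [set (ocard D1, ocard D2); (ocard D2, ocard D1)].
Proof.
apply/setP => ab; rewrite !inE; apply/imset2P/idP => [[E F EP]|].
  rewrite inE => /andP [FP /andP [EF /eqP /(merge_collision EP FP EF)]] eqEF ->.
  by case/orP: eqEF => /andP [/eqP -> /eqP ->]; rewrite eqxx ?orbT.
have collD : bmap m D1 = bmap m D2 by rewrite !bmap_merge // eqxx (negbTE D1D2).
case/orP => /eqP ->; [exists D1 D2 | exists D2 D1] => //;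
  by rewrite inE ?D1P ?D2P ?collD ?eqxx ?D1D2 // eq_sym D1D2.
Qed.

Lemma merge_not_Sigpart : m \notin Sigpart P.
Proof.
apply/negP => /mem_Sigpart [_ /(_ D2 D2P) [x /(def_pblockT D2P)]].
rewrite pblock_merge; case: eqP => [_ eqD|/[swap] -> //].
by move: D1D2; rewrite eqD eqxx.
Qed.

Lemma gen_merge_collision_sizes (W : {set {ffun X -> X}}) :
  W \subset Tpart P -> gen_sg (Sigpart P :|: W) m ->
  exists2 w, w \in W & collision_sizes w = collision_sizes m.
Proof.
move=> WT genm.
have [u [w [v [uS /setDP [wW wNS] vT eqm]]]] := gen_sg_first_out WT genm merge_not_Sigpart.
have [uB uO] := (mem_Sigpart u).1 uS.
have wB : blockwise w by apply/mem_Tpart; apply: (subsetP WT).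
have vB : blockwise v by apply/mem_Tpart.
have wNO : ~ onto_blocks w by move=> wO; move/negP: wNS; apply; apply/mem_Sigpart.
have uI x y : blk x = blk y -> u x = u y -> x = y.
  by move=> exy euxy; apply: merge_inj_blocks => //; rewrite eqm !fcompE euxy.
have ocard_bmap D : D \in P -> ocard (bmap u D) = ocard D by move=> DP; rewrite /ocard card_bmap.
have onto_u E : E \in P -> exists2 E0, E0 \in P & E = bmap u E0.
  move=> EP; have /imsetP [E0 E0P ->] : E \in bmap u @: P by rewrite bmap_onto.
  by exists E0.
have collw E F : E \in P -> F \in P -> E != F -> bmap w E = bmap w F ->
    ((E == bmap u D1) && (F == bmap u D2)) || ((E == bmap u D2) && (F == bmap u D1)).
  move=> /onto_u [E0 E0P ->] /onto_u [F0 F0P ->] EF eqEF.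
  have E0F0 : E0 != F0 by apply: contraNneq EF => ->.
  have := merge_collision E0P F0P E0F0.
  rewrite eqm !bmap_comp ?eqEF ?bmap_mem //; try exact: blockwise_comp.
  by move=> /(_ erefl) /orP [] /andP [/eqP -> /eqP ->]; rewrite !eqxx ?orbT.
exists w => //; rewrite collision_sizes_merge; apply/setP => ab; rewrite !inE.
apply/imset2P/idP => [[E F EP]|].
  rewrite inE => /andP [FP /andP [EF /eqP eqEF]] ->.
  by case/orP: (collw E F EP FP EF eqEF) => /andP [/eqP -> /eqP ->];
    rewrite !ocard_bmap // eqxx ?orbT.
have [E [F [EP FP EF eqEF]]] := collision_of_not_onto wB wNO.
have collD : bmap w (bmap u D1) = bmap w (bmap u D2).
  by case/orP: (collw E F EP FP EF eqEF) => /andP [/eqP <- /eqP <-].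
have uD1D2 : bmap u D1 != bmap u D2.
  by apply: contra D1D2 => /eqP /(bmap_inj uB uO D1P D2P) ->.
have [uD1P uD2P] := (bmap_mem uB D1P, bmap_mem uB D2P).
case/orP => /eqP ->; [exists (bmap u D1) (bmap u D2) | exists (bmap u D2) (bmap u D1)];
  by rewrite ?ocard_bmap ?inE ?uD1P ?uD2P ?collD ?uD1D2 ?eqxx // eq_sym uD1D2.
Qed.

End Merge.

Definition swap_blocks (A B : {set X}) : {ffun X -> X} :=
  [ffun x => if x \in A then emb A B x else if x \in B then emb B A x else x].

Section SwapBlocks.
Variables A B : {set X}.
Hypotheses (AP : A \in P) (BP : B \in P) (cardAB : #|A| = #|B|).
Local Notation t := (swap_blocks A B).

Lemma pblock_swap_blocks x :
  blk (t x) = if blk x == A then B else if blk x == B then A else blk x.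
Proof.
have blkE C y : C \in P -> (blk y == C) = (y \in C).
  move=> CP; apply/eqP/idP => [<-|yC]; [exact: mem_pblockT | exact: def_pblockT].
rewrite ffunE !blkE //; have [xA|xNA] := ifP.
  by apply: def_pblockT (emb_mem _ xA); rewrite ?cardAB.
have [xB|xNB] := ifP; last exact: def_pblockT (pblockT_mem x) (mem_pblockT x).
by apply: def_pblockT (emb_mem _ xB); rewrite ?cardAB.
Qed.

Lemma swap_blocksK : involutive t.
Proof.
have [<-|AB] := eqVneq A B.
  have tid y : swap_blocks A A y = y by rewrite ffunE; case: (boolP (y \in A)) => [/emb_id|].
  by move=> x; rewrite !tid.
have disj y : y \in B -> y \notin A.
  move=> yB; apply: contra AB => yA.
  by rewrite -(def_pblockT AP yA) (def_pblockT BP yB).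
move=> x; rewrite [t x]ffunE; have [xA|xNA] := ifP.
  have tB : emb A B x \in B by apply: emb_mem; rewrite ?cardAB.
  by rewrite ffunE (negbTE (disj _ tB)) tB embK ?cardAB.
have [xB|xNB] := ifP; last by rewrite ffunE xNA xNB.
by rewrite ffunE emb_mem ?cardAB ?embK ?cardAB.
Qed.

Lemma swap_blocks_Sigpart : t \in Sigpart P.
Proof.
apply/mem_Sigpart; split; first by move=> x y exy; rewrite !pblock_swap_blocks exy.
by move=> C /block_inhabited [c cC]; exists (t c); rewrite swap_blocksK.
Qed.

Lemma bmap_swap_blocks E : E \in P ->
  bmap t E = if E == A then B else if E == B then A else E.
Proof.
move=> EP; have [x xE] := block_inhabited EP; have tB := swap_blocks_Sigpart.
rewrite (bmapE _ EP xE) ?pblock_swap_blocks ?(def_pblockT EP xE) //.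
by have /mem_Sigpart [] := tB.
Qed.

End SwapBlocks.

Lemma conj_merge (s s' : {ffun X -> X}) D i : cancel s s' ->
  fcomp (fcomp s (merge D i)) s' = merge [set x | s x \in D] (fun x => s' (i (s x))).
Proof. by move=> sK; apply/ffunP => x; rewrite !(fcompE, ffunE) inE; case: ifP. Qed.

Lemma merge_conj Z Z' D1 D2 i :
  Z \in P -> Z' \in P -> D1 \in P -> D2 \in P -> Z != Z' -> D1 != D2 ->
  #|Z| = #|D1| -> #|Z'| = #|D2| ->
  {in D2 &, injective i} -> (forall x, x \in D2 -> i x \in D1) ->
  exists s s' i', [/\ s \in Sigpart P, s' \in Sigpart P, {in Z' &, injective i'},
    (forall x, x \in Z' -> i' x \in Z) & fcomp (fcomp s (merge D2 i)) s' = merge Z' i'].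
Proof.
move=> ZP Z'P D1P D2P ZZ' D1D2 cZ cZ' iI iD.
pose t1 := swap_blocks Z D1; pose E := bmap t1 Z'; pose t2 := swap_blocks E D2.
have t1S : t1 \in Sigpart P by apply: swap_blocks_Sigpart.
have [t1B t1O] := (mem_Sigpart t1).1 t1S.
have EP : E \in P by apply: bmap_mem.
have cE : #|E| = #|D2|.
  rewrite /E bmap_swap_blocks // eq_sym (negbTE ZZ'); case: eqP => [eqZ'|_] //.
  by rewrite -cZ' eqZ' -cZ.
have t2S : t2 \in Sigpart P by apply: swap_blocks_Sigpart.
have [t2B t2O] := (mem_Sigpart t2).1 t2S.
pose s := fcomp t1 t2; pose s' := fcomp t2 t1.
have sK : cancel s s' by move=> x; rewrite !fcompE !swap_blocksK.
have s'K : cancel s' s by move=> x; rewrite !fcompE !swap_blocksK.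
have [sB sO] : blockwise s /\ onto_blocks s by apply/mem_Sigpart/Sigpart_comp.
have s'B : blockwise s' by apply: blockwise_comp.
have sZ' : bmap s Z' = D2 by rewrite bmap_comp // /t2 bmap_swap_blocks // eqxx.
have D1E : D1 != E.
  apply: contraNneq ZZ' => eqD1; apply/eqP/(bmap_inj t1B t1O) => //.
  by rewrite -/E -eqD1 bmap_swap_blocks // eqxx.
have s'D1 : bmap s' D1 = Z.
  rewrite bmap_comp // /t2 bmap_swap_blocks // (negbTE D1E) (negbTE D1D2).
  by rewrite /t1 bmap_swap_blocks // eqxx; case: eqP.
have memZ' x : (s x \in D2) = (x \in Z').
  apply/idP/idP => [sxD2|xZ']; last by rewrite -sZ' mem_bmap.
  suff <- : blk x = Z' by apply: mem_pblockT.
  apply: (bmap_inj sB sO) (pblockT_mem x) Z'P _.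
  by rewrite bmap_pblock // sZ' (def_pblockT D2P sxD2).
exists s, s', (fun x => s' (i (s x))); split; try exact: Sigpart_comp.
- move=> x y xZ' yZ' /(can_inj s'K) eqi.
  by apply: (can_inj sK); apply: iI eqi; rewrite memZ'.
- by move=> x xZ'; rewrite -s'D1 mem_bmap // iD ?memZ'.
- by rewrite conj_merge //; congr merge; apply/setP => x; rewrite inE memZ'.
Qed.

Definition hit (f : X -> X) : {set {set X}} := [set blk (f x) | x : X].

Lemma hit_sub f : hit f \subset P.
Proof. by apply/subsetP => _ /imsetP [x _ ->]; apply: pblockT_mem. Qed.

Section FactorThrough.
Variables (g u : X -> X) (N : {set X}) (y0 : X).
Hypotheses (NP : N \in P) (uN : forall x, u x \notin N).
Hypothesis u_fibres : forall x x', u x = u x' -> g x = g x'.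
Hypothesis u_blocks : forall x x', blk (u x) = blk (u x') -> blk (g x) = blk (g x').

Definition factor_map : {ffun X -> X} := [ffun y =>
  if [pick x | u x == y] is Some x then g x
  else if y \in N then y0
  else if [pick x | blk (u x) == blk y] is Some x then g x else y].

Lemma factor_mapE x : factor_map (u x) = g x.
Proof.
by rewrite ffunE; case: pickP => [x' /eqP /u_fibres //|/(_ x)]; rewrite eqxx.
Qed.

Lemma factor_map_N y : y \in N -> factor_map y = y0.
Proof.
move=> yN; rewrite ffunE yN; case: pickP => // x /eqP uxy.
by move: (uN x); rewrite uxy yN.
Qed.

Lemma factor_map_out y : y \notin N ->
  (exists2 x, blk (u x) = blk y & factor_map y = g x) \/
  (forall x, blk (u x) != blk y) /\ factor_map y = y.
Proof.
move=> yNN; rewrite ffunE (negbTE yNN).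
case: pickP => [x /eqP <-|_]; first by left; exists x.
case: pickP => [x /eqP ?|noy]; first by left; exists x.
by right; split=> // x; rewrite noy.
Qed.

Lemma factor_map_blockwise : blockwise factor_map.
Proof.
move=> y y' eqy; have [yN|yNN] := boolP (y \in N).
  have y'N : y' \in N by rewrite -(def_pblockT NP yN) eqy mem_pblockT.
  by rewrite !factor_map_N.
have y'NN : y' \notin N.
  by apply: contra yNN => y'N; rewrite -(def_pblockT NP y'N) -eqy mem_pblockT.
case: (factor_map_out yNN) (factor_map_out y'NN) => [[x ux ->]|[noy ->]] [[x' ux' ->]|[noy' ->]] //.
- by apply: u_blocks; rewrite ux ux'.
- by move: (noy' x); rewrite ux eqy eqxx.
- by move: (noy x'); rewrite ux' eqy eqxx.
Qed.

Lemma hit_factor_map : blk y0 \notin hit g -> #|hit g| < #|hit factor_map|.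
Proof.
move=> y0N; apply: proper_card; rewrite properE; apply/andP; split.
  by apply/subsetP => _ /imsetP [x _ ->]; rewrite -factor_mapE; apply: imset_f.
apply/subsetPn; exists (blk y0) => //.
have [y yN] := block_inhabited NP; rewrite -(factor_map_N yN); exact: imset_f.
Qed.

End FactorThrough.

Section ShiftFactor.
Variables (g : X -> X) (pi : {set X} -> {set X}).
Hypotheses (gB : blockwise g) (piI : {in P &, injective pi}).
Hypothesis pi_g : forall E, E \in P -> pi E = bmap g E \/ pi E = E.
Variables Yb Ys : {set X}.
Hypotheses (YbP : Yb \in P) (YsP : Ys \in P) (YbYs : Yb != Ys).
Hypotheses (gYbYs : bmap g Yb = bmap g Ys) (capacity : #|bmap g Yb| <= #|pi Yb|).
Local Notation Z := (pi Yb).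
Local Notation Z' := (pi Ys).
Variable i : X -> X.
Hypotheses (iI : {in Z' &, injective i}) (iZ : forall x, x \in Z' -> i x \in Z).

Lemma pi_mem E : E \in P -> pi E \in P.
Proof. by move=> EP; case: (pi_g EP) => ->; rewrite ?bmap_mem. Qed.

Lemma pi_onto : pi @: P = P.
Proof.
apply/eqP; rewrite eqEcard (card_in_imset piI) leqnn andbT.
by apply/subsetP => _ /imsetP [E EP ->]; apply: pi_mem.
Qed.

Lemma pi_Yb_neq : Z != Z'.
Proof. by apply: contra YbYs => /eqP /piI -> //. Qed.

Definition fibre_rep x := odflt x [pick y in blk x | g y == g x].

Lemma fibre_repP x : fibre_rep x \in blk x /\ g (fibre_rep x) = g x.
Proof.
rewrite /fibre_rep; case: pickP => [y /andP [yx /eqP //]|/(_ x)].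
by rewrite mem_pblockT eqxx.
Qed.

Lemma fibre_rep_eq x x' : blk x = blk x' -> g x = g x' -> fibre_rep x = fibre_rep x'.
Proof.
move=> exx' gxx'; rewrite /fibre_rep exx' gxx'; case: pickP => // /(_ x').
by rewrite mem_pblockT eqxx.
Qed.

(* On a block moved by [pi] follow [g]; on a fixed block keep one point per fibre of [g]. *)
Definition shift0 x := if pi (blk x) == bmap g (blk x) then g x else fibre_rep x.

Lemma shift0_mem x : shift0 x \in pi (blk x).
Proof.
rewrite /shift0; case: eqP => [->|neq]; first by rewrite bmap_pblock // mem_pblockT.
by case: (pi_g (pblockT_mem x)) => // ->; case: (fibre_repP x).
Qed.

Lemma shift0_fibres x x' : blk x = blk x' -> shift0 x = shift0 x' -> g x = g x'.
Proof.
rewrite /shift0 => ->; case: ifP => // _ eqr.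
by rewrite -(fibre_repP x).2 -(fibre_repP x').2 eqr.
Qed.

Lemma shift0_eq x x' : blk x = blk x' -> g x = g x' -> shift0 x = shift0 x'.
Proof. by rewrite /shift0 => exx' gxx'; rewrite exx' gxx' (fibre_rep_eq exx' gxx'). Qed.

Lemma shift0_Ys x : x \in Ys -> shift0 x \in Z'.
Proof. by move=> xYs; rewrite -(def_pblockT YsP xYs) shift0_mem. Qed.

Definition Ys_rep v := odflt v [pick x in Ys | g x == v].

Lemma Ys_repP x : x \in Ys -> Ys_rep (g x) \in Ys /\ g (Ys_rep (g x)) = g x.
Proof.
move=> xYs; rewrite /Ys_rep; case: pickP => [y /andP [yYs /eqP //]|/(_ x)].
by rewrite xYs eqxx.
Qed.

Definition join_psi v := i (shift0 (Ys_rep v)).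

Lemma join_psi_g x : x \in Ys -> join_psi (g x) = i (shift0 x).
Proof.
move=> xYs; have [rYs grx] := Ys_repP xYs; congr i; apply: shift0_eq => //.
by rewrite (def_pblockT YsP rYs) (def_pblockT YsP xYs).
Qed.

(* [lam] will place the points of [Yb] in [Z] so that, after the merge, they meet the points
   of [Ys] exactly when [g] identifies them. *)
Lemma join_lam_exists : exists lam : X -> X,
  [/\ {in g @: (Yb :|: Ys) &, injective lam}, forall v, v \in g @: (Yb :|: Ys) -> lam v \in Z
    & {in g @: Ys, lam =1 join_psi}].
Proof.
apply: inj_extend.
- by apply: imsetS; rewrite subsetUr.
- move=> _ _ /imsetP [x xYs ->] /imsetP [x' x'Ys ->]; rewrite !join_psi_g //.
  move/iI => /(_ (shift0_Ys xYs) (shift0_Ys x'Ys)); apply: shift0_fibres.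
  by rewrite (def_pblockT YsP xYs) (def_pblockT YsP x'Ys).
- by move=> _ /imsetP [x xYs ->]; rewrite join_psi_g // iZ // shift0_Ys.
- apply: leq_trans capacity; apply/subset_leq_card/subsetP => _ /imsetP [x xY ->].
  by case/setUP: xY => xY; [|rewrite gYbYs]; apply: mem_bmap.
Qed.

Section Shift.
Variable lam : X -> X.
Hypotheses (lamI : {in g @: (Yb :|: Ys) &, injective lam}).
Hypotheses (lamZ : forall v, v \in g @: (Yb :|: Ys) -> lam v \in Z).
Hypothesis lam_psi : {in g @: Ys, lam =1 join_psi}.
Local Notation c := (merge Z' i).

Definition shift : {ffun X -> X} := [ffun x => if blk x == Yb then lam (g x) else shift0 x].

Lemma g_join x : (blk x == Yb) || (blk x == Ys) -> g x \in g @: (Yb :|: Ys).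
Proof. by case/orP => /eqP <-; rewrite imset_f // inE mem_pblockT ?orbT. Qed.

Lemma pblock_shift x : blk (shift x) = pi (blk x).
Proof.
apply: def_pblockT; first exact/pi_mem/pblockT_mem.
rewrite ffunE; case: eqP => [eqx|_]; last exact: shift0_mem.
by rewrite eqx lamZ // g_join // eqx eqxx.
Qed.

Lemma shift_Sigpart : shift \in Sigpart P.
Proof.
apply/mem_Sigpart; split=> [x y exy|C]; first by rewrite !pblock_shift exy.
rewrite -pi_onto => /imsetP [E EP ->]; have [x xE] := block_inhabited EP.
by exists x; rewrite -(def_pblockT EP xE) -pblock_shift mem_pblockT.
Qed.

Lemma pblock_merge_shift x : blk (c (shift x)) = if pi (blk x) == Z' then Z else pi (blk x).
Proof. by rewrite (@pblock_merge Z) ?pi_mem // pblock_shift. Qed.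

Lemma merge_shift_notin x : c (shift x) \notin Z'.
Proof.
have : blk (c (shift x)) != Z' by rewrite pblock_merge_shift; case: ifP => [_|/negbT //]; exact: pi_Yb_neq.
by apply: contra => /(def_pblockT (pi_mem YsP)) ->.
Qed.

Lemma merge_shift_join x : (blk x == Yb) || (blk x == Ys) -> c (shift x) = lam (g x).
Proof.
move=> xY; rewrite [shift x]ffunE ffunE; case: (eqVneq (blk x) Yb) => [_|xNYb].
  case: ifP => // lamZ'; case/negP: pi_Yb_neq.
  by rewrite -(def_pblockT (pi_mem YsP) lamZ') (def_pblockT (pi_mem YbP) (lamZ (g_join xY))).
move: xY; rewrite (negbTE xNYb) => /eqP xYs.
have xinYs : x \in Ys by rewrite -xYs mem_pblockT.
by rewrite shift0_Ys // lam_psi ?imset_f // join_psi_g.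
Qed.

Lemma pi_merge_collision E F : E \in P -> F \in P ->
  (if pi E == Z' then Z else pi E) = (if pi F == Z' then Z else pi F) ->
  E = F \/ ((E == Yb) || (E == Ys)) && ((F == Yb) || (F == Ys)).
Proof.
move=> EP FP; have [piE|piE] := eqVneq (pi E) Z'; have [piF|piF] := eqVneq (pi F) Z' => eqEF.
- by left; apply: piI => //; rewrite piE piF.
- by right; rewrite (piI EP YsP piE) -(piI YbP FP eqEF) !eqxx orbT.
- by right; rewrite (piI FP YsP piF) (piI EP YbP eqEF) !eqxx orbT.
- by left; apply: piI.
Qed.

Lemma merge_shift_other x : ~~ ((blk x == Yb) || (blk x == Ys)) -> c (shift x) = shift0 x.
Proof.
case/norP => xNYb xNYs; rewrite [shift x]ffunE (negbTE xNYb) ffunE.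
case: ifP => // xZ'; case/negP: xNYs; apply/eqP/piI; rewrite ?pblockT_mem //.
by rewrite -(def_pblockT (pi_mem (pblockT_mem x)) (shift0_mem x)) (def_pblockT (pi_mem YsP) xZ').
Qed.

Lemma merge_shift_fibres x x' : c (shift x) = c (shift x') -> g x = g x'.
Proof.
move=> eqc; have joined : (blk x == Yb) || (blk x == Ys) -> (blk x' == Yb) || (blk x' == Ys) ->
    g x = g x'.
  by move=> xY x'Y; apply: lamI; rewrite ?g_join // -(merge_shift_join xY) -(merge_shift_join x'Y).
have := congr1 blk eqc; rewrite !pblock_merge_shift.
case/(pi_merge_collision (pblockT_mem x) (pblockT_mem x')) => [exx'|/andP []//].
have [xY|xNY] := boolP ((blk x == Yb) || (blk x == Ys)); first by apply: joined; rewrite -?exx'.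
have x'NY : ~~ ((blk x' == Yb) || (blk x' == Ys)) by rewrite -exx'.
by apply: (shift0_fibres exx'); rewrite -(merge_shift_other xNY) -(merge_shift_other x'NY).
Qed.

Lemma merge_shift_blocks x x' :
  blk (c (shift x)) = blk (c (shift x')) -> blk (g x) = blk (g x').
Proof.
rewrite !pblock_merge_shift.
case/(pi_merge_collision (pblockT_mem x) (pblockT_mem x')) => [/gB //|/andP [xY x'Y]].
have joinC y : (blk y == Yb) || (blk y == Ys) -> blk (g y) = bmap g Yb.
  by rewrite -bmap_pblock //; case/orP => /eqP ->.
by rewrite !joinC.
Qed.

End Shift.

Lemma shift_factor : exists2 s, s \in Sigpart P &
  let u := fcomp s (merge Z' i) in
  [/\ forall x, u x \notin Z', forall x x', u x = u x' -> g x = g x'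
    & forall x x', blk (u x) = blk (u x') -> blk (g x) = blk (g x')].
Proof.
have [lam [lamI lamZ lam_psi]] := join_lam_exists.
exists (shift lam); first exact: shift_Sigpart.
split=> [x|x x'|x x']; rewrite !fcompE.
- exact: merge_shift_notin.
- exact: merge_shift_fibres.
- exact: merge_shift_blocks.
Qed.

End ShiftFactor.

Lemma shift_merge_factor (g : {ffun X -> X}) pi Yb Ys y0 i :
  blockwise g -> {in P &, injective pi} -> (forall E, E \in P -> pi E = bmap g E \/ pi E = E) ->
  Yb \in P -> Ys \in P -> Yb != Ys -> bmap g Yb = bmap g Ys -> #|bmap g Yb| <= #|pi Yb| ->
  blk y0 \notin hit g ->
  {in pi Ys &, injective i} -> (forall x, x \in pi Ys -> i x \in pi Yb) ->
  exists s (h : {ffun X -> X}), [/\ s \in Sigpart P, blockwise h, #|hit g| < #|hit h|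
                & g = fcomp (fcomp s (merge (pi Ys) i)) h].
Proof.
move=> gB piI pi_g YbP YsP YbYs gYbYs capacity y0N iI iZ.
have [s sS [uN u_fibres u_blocks]] := shift_factor gB piI pi_g YbP YsP YbYs gYbYs capacity iI iZ.
have Z'P : pi Ys \in P := pi_mem gB pi_g YsP.
exists s, (factor_map g (fcomp s (merge (pi Ys) i)) (pi Ys) y0); split=> //.
- exact: factor_map_blockwise.
- exact: hit_factor_map.
- by apply/ffunP => x; rewrite fcompE factor_mapE.
Qed.

Lemma cycle_block_perm (g : X -> X) : blockwise g -> ~~ (P \subset hit g) ->
  exists pi Y Y', [/\ {in P &, injective pi}, forall E, E \in P -> pi E = bmap g E \/ pi E = E,
    Y \in P, Y' \in P & [/\ Y != Y', bmap g Y = bmap g Y', pi Y = bmap g Y & pi Y' = Y']].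
Proof.
move=> gB /subsetPn [m mP mNhit].
have mNphi : m \notin bmap g @: P.
  apply: contra mNhit => /imsetP [E EP ->]; have [x xE] := block_inhabited EP.
  by rewrite (bmapE gB EP xE); apply: imset_f.
set A := periodic_pts P (bmap g).
have [Y [Y' [YA /setDP [Y'P Y'NA] gYY']]] := periodic_entry (bmap_mem gB) mP mNphi.
have YP : Y \in P by move: YA; rewrite inE => /andP [].
have phiA : bmap g @: A = A := phi_periodic_pts (bmap_mem gB).
have phiAI : {in A &, injective (bmap g)} by apply/imset_injP; rewrite phiA.
exists (fun E => if E \in A then bmap g E else E), Y, Y'; split=> //.
- move=> E F _ _; have [EA|ENA] := boolP (E \in A); have [FA|FNA] := boolP (F \in A) => //.
  + exact: phiAI.
  + by move=> eqEF; move: FNA; rewrite -eqEF -phiA imset_f.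
  + by move=> eqEF; move: ENA; rewrite eqEF -phiA imset_f.
- by move=> E _; case: ifP; [left|right].
- by split; rewrite ?YA ?(negbTE Y'NA) //; apply: contraNneq Y'NA => <-.
Qed.

Lemma factor_step (g : {ffun X -> X}) : blockwise g -> ~~ (P \subset hit g) ->
  exists Z Z', [/\ Z \in P, Z' \in P, Z != Z', #|Z'| <= #|Z| &
    forall i, {in Z' &, injective i} -> (forall x, x \in Z' -> i x \in Z) ->
    exists s (h : {ffun X -> X}), [/\ s \in Sigpart P, blockwise h, #|hit g| < #|hit h|
                  & g = fcomp (fcomp s (merge Z' i)) h]].
Proof.
move=> gB PNhit; have [pi [Y [Y' [piI pi_g YP Y'P [YY' gYY' piY piY']]]]] := cycle_block_perm gB PNhit.
have [y0 y0Nhit] : exists y0, blk y0 \notin hit g.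
  case/subsetPn: PNhit => m mP mNhit; have [y0 y0m] := block_inhabited mP.
  by exists y0; rewrite (def_pblockT mP y0m).
have piYY' : pi Y != pi Y' by apply: contraNneq YY' => /(piI _ _ YP Y'P) ->.
have [le|lt] := leqP #|Y'| #|bmap g Y|.
- exists (pi Y), (pi Y'); split; rewrite ?piY ?piY' ?bmap_mem //; first by rewrite -piY -piY'.
  move=> i iI iZ; rewrite -piY -piY' in iI iZ *.
  by apply: (shift_merge_factor gB piI pi_g YP Y'P YY' gYY' _ y0Nhit iI iZ); rewrite piY.
- exists (pi Y'), (pi Y); split; rewrite ?piY ?piY' ?bmap_mem 1?ltnW //.
    by rewrite -piY -piY' eq_sym.
  move=> i iI iZ; rewrite -piY -piY' in iI iZ *.
  apply: (shift_merge_factor gB piI pi_g Y'P YP _ (esym gYY') _ y0Nhit iI iZ).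
    by rewrite eq_sym.
  by rewrite piY' -gYY' ltnW.
Qed.

Lemma Sigpart_hit (g : {ffun X -> X}) : blockwise g -> P \subset hit g -> g \in Sigpart P.
Proof.
move=> gB /subsetP Phit; apply/mem_Sigpart; split=> // B /Phit /imsetP [x _ ->].
by exists x; apply: mem_pblockT.
Qed.

Lemma gen_sg_merges (W : {set {ffun X -> X}}) :
  (forall Z Z', Z \in P -> Z' \in P -> Z != Z' -> #|Z'| <= #|Z| ->
     exists i, [/\ {in Z' &, injective i}, forall x, x \in Z' -> i x \in Z
                 & gen_sg (Sigpart P :|: W) (merge Z' i)]) ->
  forall g, g \in Tpart P -> gen_sg (Sigpart P :|: W) g.
Proof.
move=> merges g /mem_Tpart gB; have [n] := ubnP (#|P| - #|hit g|).
elim: n g gB => // n IHn g gB lt_n.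
have [Phit|PNhit] := boolP (P \subset hit g).
  by apply/gen_sg_mem/setUP; left; apply: Sigpart_hit.
have [Z [Z' [ZP Z'P ZZ' leZ factor]]] := factor_step gB PNhit.
have [i [iI iZ gen_merge]] := merges Z Z' ZP Z'P ZZ' leZ.
have [s [h [sS hB lt_hit ->]]] := factor i iI iZ.
apply/gen_sg_comp/IHn => //; first by apply/gen_sg_comp/gen_merge/gen_sg_mem/setUP; left.
by have := subset_leq_card (hit_sub h); lia.
Qed.

Definition size_pairs : {set 'I_#|X|.+1 * 'I_#|X|.+1} :=
  [set (ocard E, ocard F) | E in P, F in P & (E != F) && (#|F| <= #|E|)].

(* The default branch is never taken on [size_pairs]. *)
Definition rep_merge (ab : 'I_#|X|.+1 * 'I_#|X|.+1) : {ffun X -> X} :=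
  if [pick D | [&& D.1 \in P, D.2 \in P, D.1 != D.2 & (ocard D.1, ocard D.2) == ab]]
  is Some D then merge D.2 (emb D.2 D.1) else ffid X.

Lemma size_pairs_le ab : ab \in size_pairs -> ab.2 <= ab.1.
Proof.
by case/imset2P => E F _; rewrite inE => /andP [_ /andP [_ le]] ->; rewrite /= !ocardE.
Qed.

Lemma rep_merge_props ab : ab \in size_pairs -> exists D1 D2,
  [/\ D1 \in P, D2 \in P, D1 != D2 & (ocard D1, ocard D2) = ab] /\
  [/\ {in D2 &, injective (emb D2 D1)}, forall x, x \in D2 -> emb D2 D1 x \in D1
    & rep_merge ab = merge D2 (emb D2 D1)].
Proof.
move=> abS; rewrite /rep_merge; case: pickP => [[D1 D2] /and4P [D1P D2P D1D2 /eqP eqab]|].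
  have le : #|D2| <= #|D1| by rewrite -!ocardE; move: (size_pairs_le abS); rewrite -eqab.
  by exists D1, D2; split; split=> //; [apply: emb_inj | move=> x; apply: emb_mem].
case/imset2P: abS => E F EP; rewrite inE => /andP [FP /andP [EF _]] -> /(_ (E, F)).
by rewrite EP FP EF eqxx.
Qed.

Definition pair_set (ab : 'I_#|X|.+1 * 'I_#|X|.+1) := [set ab; (ab.2, ab.1)].

Lemma pair_set_inj : {in size_pairs &, injective pair_set}.
Proof.
move=> [a b] [c d] /size_pairs_le /= ba /size_pairs_le /= dc /setP /(_ (a, b)).
rewrite !inE eqxx => /esym /orP [/eqP //|/eqP [ad bc]].
have cd : c = d by apply/val_inj/eqP; rewrite eqn_leq dc andbT -bc -ad.
by rewrite ad bc cd.
Qed.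

Lemma collision_sizes_rep ab : ab \in size_pairs -> collision_sizes (rep_merge ab) = pair_set ab.
Proof.
move=> abS; have [D1 [D2 [[D1P D2P D1D2 <-] [iI iD ->]]]] := rep_merge_props abS.
exact: collision_sizes_merge.
Qed.

Definition rep_merges := rep_merge @: size_pairs.

Lemma rep_merges_Tpart : rep_merges \subset Tpart P.
Proof.
apply/subsetP => _ /imsetP [ab abS ->].
have [D1 [D2 [[D1P D2P _ _] [_ iD ->]]]] := rep_merge_props abS.
exact/mem_Tpart/(merge_blockwise D1P D2P iD).
Qed.

Lemma card_rep_merges : #|rep_merges| = #|size_pairs|.
Proof.
apply: card_in_imset => ab cd abS cdS eqm; apply: pair_set_inj => //.
by rewrite -!collision_sizes_rep // eqm.
Qed.

Lemma rep_merges_generate : generates (Tpart P) (Sigpart P) rep_merges.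
Proof.
move=> g; split; first exact: gen_sg_Tpart rep_merges_Tpart.
apply: gen_sg_merges => Z Z' ZP Z'P ZZ' leZ.
have abS : (ocard Z, ocard Z') \in size_pairs by apply/imset2P; exists Z Z'; rewrite // inE Z'P ZZ'.
have [D1 [D2 [[D1P D2P D1D2 [c1 c2]] [iI iD eqm]]]] := rep_merge_props abS.
have [s [s' [i' [sS s'S i'I i'Z eqi']]]] :=
  merge_conj ZP Z'P D1P D2P ZZ' D1D2 (esym (ocard_eq_card c1)) (esym (ocard_eq_card c2)) iI iD.
exists i'; split=> //; rewrite -eqi'.
apply/gen_sg_comp/gen_sg_mem/setUP; last by left.
apply/gen_sg_comp/gen_sg_mem/setUP; first by apply/gen_sg_mem/setUP; left.
by right; rewrite -eqm imset_f.
Qed.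

Lemma rank_lower_bound (W : {set {ffun X -> X}}) :
  W \subset Tpart P -> generates (Tpart P) (Sigpart P) W -> #|size_pairs| <= #|W|.
Proof.
move=> WT genW; rewrite -(card_in_imset pair_set_inj).
apply: (leq_trans _ (leq_imset_card (fun w : {ffun X -> X} => collision_sizes w) W)).
apply/subset_leq_card/subsetP.
move=> _ /imsetP [ab abS ->]; have [D1 [D2 [[D1P D2P D1D2 _] [iI iD eqm]]]] := rep_merge_props abS.
have mT : merge D2 (emb D2 D1) \in Tpart P by exact/mem_Tpart/(merge_blockwise D1P D2P iD).
have [w wW eqw] := gen_merge_collision_sizes D1P D2P D1D2 iI iD WT ((genW _).2 mT).
by rewrite -(collision_sizes_rep abS) eqm -eqw imset_f.
Qed.

Theorem relative_rank_size_pairs : relative_rank_is (Tpart P) (Sigpart P) #|size_pairs|.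
Proof.
split; last exact: rank_lower_bound.
exists rep_merges; split; first exact: rep_merges_Tpart.
by split; [exact: rep_merges_generate | exact: card_rep_merges].
Qed.

Definition present_sizes := [set a : 'I_#|X|.+1 | 0 < nblocks P a].
Definition repeated_sizes := [set a : 'I_#|X|.+1 | 1 < nblocks P a].

Lemma nblocks_gt0P k : reflect (exists2 B, B \in P & #|B| = k) (0 < nblocks P k).
Proof.
apply: (iffP card_gt0P) => [[B]|[B BP eqB]]; last by exists B; rewrite inE BP eqB eqxx.
by rewrite inE => /andP [BP /eqP eqB]; exists B.
Qed.

Lemma nblocks_gt1P k :
  reflect (exists E F, [/\ E \in P, F \in P, E != F, #|E| = k & #|F| = k]) (1 < nblocks P k).
Proof.
apply: (iffP card_gt1P) => [[E [F []]]|[E [F [EP FP EF eqE eqF]]]].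
  by rewrite !inE => /andP [EP /eqP eqE] /andP [FP /eqP eqF] EF; exists E, F.
by exists E, F; rewrite !inE EP FP eqE eqF !eqxx.
Qed.

Lemma ocard_eq (B : {set X}) (a : 'I_#|X|.+1) : #|B| = a -> ocard B = a.
Proof. by move=> eqB; apply: val_inj; rewrite /= ocardE. Qed.

Lemma mem_size_pairs ab : (ab \in size_pairs) =
  [&& ab.2 < ab.1, ab.1 \in present_sizes & ab.2 \in present_sizes]
  || (ab.1 == ab.2) && (ab.1 \in repeated_sizes).
Proof.
apply/imset2P/orP => [[E F EP]|].
  rewrite inE => /andP [FP /andP [EF]]; rewrite leq_eqVlt => /orP [/eqP eqEF|lt] ->.
    right; rewrite /= inE ocardE; apply/andP; split.
      by apply/eqP/val_inj; rewrite /= !ocardE.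
    by apply/nblocks_gt1P; exists E, F.
  left; rewrite /= !inE !ocardE lt /=.
  by apply/andP; split; apply/nblocks_gt0P; [exists E | exists F].
case: ab => a b /=; rewrite !inE => -[/and3P [ba /nblocks_gt0P [E EP eqE] /nblocks_gt0P [F FP eqF]]|].
  exists E F => //; last by rewrite (ocard_eq eqE) (ocard_eq eqF).
  rewrite inE FP eqE eqF (ltnW ba) andbT; apply: contraTneq ba => EF.
  by rewrite -eqE -eqF EF ltnn.
case/andP => /eqP <- /nblocks_gt1P [E [F [EP FP EF eqE eqF]]].
by exists E F => //; [rewrite inE FP EF eqE eqF leqnn | rewrite (ocard_eq eqE) (ocard_eq eqF)].
Qed.

Lemma card_size_pairs : #|size_pairs| = 'C(#|present_sizes|, 2) + #|repeated_sizes|.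
Proof.
pose strict := [set ab : 'I_#|X|.+1 * 'I_#|X|.+1 |
  [&& ab.2 < ab.1, ab.1 \in present_sizes & ab.2 \in present_sizes]].
have diag_inj : injective (fun a : 'I_#|X|.+1 => (a, a)) by move=> a b [].
have -> : size_pairs = strict :|: [set (a, a) | a in repeated_sizes].
  apply/setP => -[a b]; rewrite mem_size_pairs !inE /=; congr orb.
  by apply/andP/imsetP => [[/eqP -> bR]|[c cR [-> ->]]]; [exists b; rewrite ?inE | move: cR; rewrite inE].
rewrite cardsU card_strict_pairs (card_imset _ diag_inj).
suff -> : strict :&: [set (a, a) | a in repeated_sizes] = set0 by rewrite cards0 subn0.
apply/setP => -[a b]; rewrite !inE; apply/negP => /andP [/and3P [ba _ _] /imsetP [c _ [ac bc]]].
by rewrite ac bc ltnn in ba.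
Qed.

End Partition.

Section SizeCount.
Variables (X : finType) (P : {set {set X}}) (p q t : nat) (ns ms ls : seq nat).
Hypotheses (size_ns : size ns = p) (size_ms : size ms = p) (size_ls : size ls = q).
Hypotheses (uniq_ns : uniq ns) (uniq_ls : uniq ls).
Hypotheses (ns_ge2 : all (fun n => 2 <= n) ns) (ms_ge2 : all (fun m => 2 <= m) ms).
Hypotheses (ls_ge2 : all (fun l => 2 <= l) ls) (ls_ns : all (fun l => l \notin ns) ls).
Hypothesis nblocks_ns : forall i, i < p -> nblocks P (nth 0 ns i) = nth 0 ms i.
Hypothesis nblocks_ls : forall j, j < q -> nblocks P (nth 0 ls j) = 1.
Hypothesis nblocks_1 : nblocks P 1 = t.
Hypothesis block_sizes : forall B, B \in P -> [|| #|B| == 1, #|B| \in ns | #|B| \in ls].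

Lemma mem_ns_nblocks k : k \in ns -> 1 < nblocks P k.
Proof.
move=> kns; have ik : index k ns < p by rewrite -size_ns index_mem.
by rewrite -(nth_index 0 kns) nblocks_ns // (allP ms_ge2) // mem_nth ?size_ms.
Qed.

Lemma mem_ls_nblocks k : k \in ls -> nblocks P k = 1.
Proof.
by move=> kls; rewrite -(nth_index 0 kls) nblocks_ls // -size_ls index_mem.
Qed.

Lemma nblocks_gt0_sizes k : (0 < nblocks P k) = (k \in ns ++ ls ++ nseq (0 < t) 1).
Proof.
rewrite !mem_cat mem_nseq lt0b; apply/idP/idP => [/nblocks_gt0P [B BP <-]|].
  case/or3P: (block_sizes BP) => [/eqP B1|->|->]; rewrite ?orbT //.
  by rewrite B1 eqxx -nblocks_1 andbT; apply/orP; right; apply/orP; right; apply/nblocks_gt0P; exists B.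
case/or3P => [/mem_ns_nblocks/ltnW //|/mem_ls_nblocks -> //|/andP [t0 /eqP ->]].
by rewrite nblocks_1.
Qed.

Lemma nblocks_gt1_sizes k : (1 < nblocks P k) = (k \in ns ++ nseq (1 < t) 1).
Proof.
rewrite mem_cat mem_nseq lt0b; apply/idP/idP => [gt1|/orP [/mem_ns_nblocks //|/andP [t1 /eqP ->]]];
  last by rewrite nblocks_1.
have : k \in ns ++ ls ++ nseq (0 < t) 1 by rewrite -nblocks_gt0_sizes ltnW.
rewrite !mem_cat mem_nseq lt0b => /or3P [-> //|/mem_ls_nblocks k1|/andP [_ /eqP k1]].
  by rewrite k1 in gt1.
by move: gt1; rewrite k1 nblocks_1 => ->; rewrite eqxx orbT.
Qed.

Lemma one_notin_nseq s n : all (fun n => 2 <= n) s -> ~~ has (mem s) (nseq n 1).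
Proof. by move=> /allP s2; apply/hasPn => x; rewrite mem_nseq => /andP [_ /eqP ->]; apply/negP => /s2. Qed.

Lemma nblocks_sizes_bound k : 0 < nblocks P k -> k < #|X|.+1.
Proof. by case/nblocks_gt0P => B _ <-; rewrite ltnS max_card. Qed.

Lemma card_present_sizes : #|present_sizes P| = p + q + (0 < t).
Proof.
have -> : present_sizes P = [set a : 'I_#|X|.+1 | val a \in ns ++ ls ++ nseq (0 < t) 1].
  by apply/setP => a; rewrite !inE nblocks_gt0_sizes.
rewrite card_ord_mem ?size_cat ?size_nseq ?size_ns ?size_ls ?addnA //.
  rewrite !cat_uniq uniq_ns uniq_ls has_cat negb_or /=; apply/and3P; split; last by case: (0 < t).
    by apply/andP; split; [apply/hasPn => l /(allP ls_ns) | apply: one_notin_nseq].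
  exact: one_notin_nseq.
by apply/allP => k; rewrite -nblocks_gt0_sizes; apply: nblocks_sizes_bound.
Qed.

Lemma card_repeated_sizes : #|repeated_sizes P| = p + (1 < t).
Proof.
have -> : repeated_sizes P = [set a : 'I_#|X|.+1 | val a \in ns ++ nseq (1 < t) 1].
  by apply/setP => a; rewrite !inE nblocks_gt1_sizes.
rewrite card_ord_mem ?size_cat ?size_nseq ?size_ns //.
  rewrite cat_uniq uniq_ns /=; apply/andP; split; last by case: (1 < t).
  exact: one_notin_nseq.
apply/allP => k; rewrite -nblocks_gt1_sizes => /ltnW; apply: nblocks_sizes_bound.
Qed.

End SizeCount.

Lemma hfunE p q t : 'C(p + q + (0 < t), 2) + (p + (1 < t)) = 'C(p + q, 2) + p + hfun p q t.
Proof. by case: t => [|[|t]]; rewrite /= ?addn0 ?addn1 ?binS ?bin1; lia. Qed.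

Theorem corollary3p4 (X : finType) (P : {set {set X}})
  (p q t : nat) (ns ms ls : seq nat) :
  0 < #|X| ->
  partition P [set: X] ->
  size ns = p -> size ms = p -> size ls = q ->
  uniq ns -> uniq ls ->
  all (fun n => 2 <= n) ns -> all (fun m => 2 <= m) ms -> all (fun l => 2 <= l) ls ->
  all (fun l => l \notin ns) ls ->
  (forall i, i < p -> nblocks P (nth 0 ns i) = nth 0 ms i) ->
  (forall j, j < q -> nblocks P (nth 0 ls j) = 1) ->
  nblocks P 1 = t ->
  (forall B, B \in P -> [|| #|B| == 1, #|B| \in ns | #|B| \in ls]) ->
  relative_rank_is (Tpart P) (Sigpart P) ('C(p + q, 2) + p + hfun p q t).
Proof.
move=> _ partP size_ns size_ms size_ls uniq_ns uniq_ls ns_ge2 ms_ge2 ls_ge2 ls_ns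
  nblocks_ns nblocks_ls nblocks_1 block_sizes.
have -> : 'C(p + q, 2) + p + hfun p q t = #|size_pairs P|.
  rewrite card_size_pairs (@card_present_sizes X P p q t ns ms ls) //.
  rewrite (@card_repeated_sizes X P p q t ns ms ls) //.
  by rewrite hfunE.
exact: relative_rank_size_pairs.
Qed.
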